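(* A strongly regular graph with parameters $(76,30,8,14)$ does not contain a $16$-coclique (a set of $16$ pairwise non-adjacent vertices) as an induced subgraph.
   Context: A graph is strongly regular with parameters $(v,k,\lambda,\mu)$ if it has $v$ vertices, is $k$-regular, adjacent vertices have exactly $\lambda$ common neighbours and distinct non-adjacent vertices have exactly $\mu$ common neighbours. *)

From mathcomp Require Import all_boot.
Set Implicit Arguments. Unset Strict Implicit. Unset Printing Implicit Defensive.

Definition simple_graph (T : finType) (e : rel T) : Prop :=
  (forall x y, e x y = e y x) /\ (forall x, ~~ e x x).

Definition srg (T : finType) (e : rel T) (v k lam mu : nat) : Prop :=
  [/\ simple_graph e,
      #|T| = v,
      (forall x, #|[set y | e x y]| = k),
      (forall x y, e x y -> #|[set z | e x z && e y z]| = lam) &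
      (forall x y, x != y -> ~~ e x y -> #|[set z | e x z && e y z]| = mu)].

Definition coclique (T : finType) (e : rel T) (S : {set T}) : Prop :=
  forall x y, x \in S -> y \in S -> ~~ e x y.

From mathcomp Require Import all_boot all_order all_algebra.
From mathcomp Require Import ring zify.
Import Order.TTheory GRing.Theory Num.Theory.
Set Implicit Arguments. Unset Strict Implicit. Unset Printing Implicit Defensive.

(** The eigenvalues of A are 30, 2 and -8, so 16 = 76 * 8 / 38 is the Hoffman
bound and S is extremal: over the 60 vertices outside S the number of
neighbours in S has mean 8 and mean square 64, hence is constantly 8.  On these
outer vertices, with T counting common neighbours in S, the matrix
Q = 12 I - 6 A - 3 T + 14 J satisfies Q^2 = 60 Q and Q_xx = 2; positivity of
the resulting sums of squares and Q = 2 (mod 3) leave only the entries 2 and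
-1, so Q_xz = 2 is an equivalence relation with classes of 20 vertices.  A
class C induces a 2-regular triangle-free graph, and the +-1 vectors
s_x = (2 A_xp - 1)_(p in S), x in C, have Gram matrix 16 I - 8 A_C.  The S x S
matrix K = s^T (4 I + A_C) s has trace 960, zero row sums and
sum K_pq^2 <= 61440, which forces K = 64 I - 4 J.  But K_pp = 60 says that the
edges of C avoiding the neighbourhood of p number (2m - 15)/2, where m is the
number of non-neighbours of p in C. *)

Local Open Scope ring_scope.

Definition b2z (b : bool) : int := if b then 1 else 0.

Lemma b2zM b c : b2z b * b2z c = b2z (b && c).
Proof. by case: b; case: c. Qed.

Lemma b2zK b : b2z b * b2z b = b2z b.
Proof. by rewrite b2zM andbb. Qed.

Lemma b2z_ge0 b : 0 <= b2z b.
Proof. by case: b. Qed.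

Lemma card_set_b2z (T : finType) (P : pred T) :
  (#|[set z | P z]|%:R : int) = \sum_z b2z (P z).
Proof.
rewrite -sum1_card natr_sum big_mkcond /=; apply: eq_bigr => i _.
by rewrite inE; case: (P i).
Qed.

Lemma sum_sym_diag0_even (T : finType) (f : T -> T -> int) :
  (forall x z, f x z = f z x) -> (forall x, f x x = 0) ->
  exists M, \sum_x \sum_z f x z = 2 * M.
Proof.
move=> fC f0; pose r (x z : T) := b2z (enum_rank x < enum_rank z)%N.
exists (\sum_x \sum_z r x z * f x z).
have split_r x z : f x z = r x z * f x z + r z x * f x z.
  rewrite /r; case: (ltngtP (enum_rank x) (enum_rank z)) => h /=.
  - by rewrite mul1r mul0r addr0.
  - by rewrite mul1r mul0r add0r.
  - by rewrite (enum_rank_inj (val_inj h)) f0 mul0r addr0.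
rewrite (eq_bigr (fun x => \sum_z (r x z * f x z + r z x * f x z))); last first.
  by move=> x _; apply: eq_bigr => z _; apply: split_r.
rewrite (eq_bigr (fun x => \sum_z r x z * f x z + \sum_z r z x * f x z)); last first.
  by move=> x _; rewrite big_split.
rewrite big_split /= [X in _ + X]exchange_big /=.
have -> : \sum_z \sum_x r z x * f x z = \sum_x \sum_z r x z * f x z.
  by apply: eq_bigr => x _; apply: eq_bigr => z _; rewrite fC.
by rewrite mulr2n mulrDl mul1r.
Qed.

Lemma sumr_wsq_ge0 (R : realDomainType) (I : finType) (w f : I -> R) :
  (forall i, 0 <= w i) -> 0 <= \sum_i w i * f i ^+ 2.
Proof. by move=> w_ge0; apply: sumr_ge0 => i _; rewrite mulr_ge0 ?sqr_ge0. Qed.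

Lemma sumr_wsq_eq0 (R : realDomainType) (I : finType) (w f : I -> R) :
  (forall i, 0 <= w i) -> \sum_i w i * f i ^+ 2 = 0 ->
  forall i, w i != 0 -> f i = 0.
Proof.
move=> w_ge0 sum0 i wi0.
have /(_ i isT)/eqP := psumr_eq0P (fun j _ => mulr_ge0 (w_ge0 j) (sqr_ge0 (f j))) sum0.
by rewrite mulf_eq0 (negbTE wi0) sqrf_eq0 /= => /eqP.
Qed.

Lemma mulr_sum_sum (R : pzSemiRingType) (I J : finType) (f : I -> R) (g : J -> R) :
  (\sum_i f i) * (\sum_j g j) = \sum_i \sum_j f i * g j.
Proof. by rewrite mulr_suml; apply: eq_bigr => i _; rewrite mulr_sumr. Qed.

Lemma sum_mul_lincomb (R : comRingType) (I J : finType) (w : J -> R)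
    (s : I -> J -> R) (a b : I -> R) :
  \sum_j w j * (\sum_i a i * s i j) * (\sum_i b i * s i j) =
  \sum_i \sum_k a i * b k * \sum_j w j * s i j * s k j.
Proof.
transitivity (\sum_j \sum_i \sum_k w j * (a i * s i j) * (b k * s k j)).
  apply: eq_bigr => j _; rewrite -mulrA mulr_sum_sum mulr_sumr.
  by apply: eq_bigr => i _; rewrite mulr_sumr; apply: eq_bigr => k _; rewrite mulrA.
rewrite exchange_big; apply: eq_bigr => i _ /=.
rewrite exchange_big; apply: eq_bigr => k _ /=.
by rewrite mulr_sumr; apply: eq_bigr => j _; ring.
Qed.

Section CocliqueInSRG.
Variables (T : finType) (e : rel T) (S : {set T}).
Hypothesis e_sym : forall x y, e x y = e y x.
Hypothesis e_irr : forall x, ~~ e x x.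
Hypothesis card_T : #|T| = 76%N.
Hypothesis deg : forall x, #|[set y | e x y]| = 30%N.
Hypothesis lam : forall x y, e x y -> #|[set z | e x z && e y z]| = 8%N.
Hypothesis mu : forall x y, x != y -> ~~ e x y -> #|[set z | e x z && e y z]| = 14%N.
Hypothesis card_S : #|S| = 16%N.
Hypothesis S_coclique : coclique e S.

Definition adj x y := b2z (e x y).
Definition inS y := b2z (y \in S).
Definition outS y := 1 - inS y.
Definition delta (x y : T) := b2z (x == y).

Lemma adjC x y : adj x y = adj y x. Proof. by rewrite /adj e_sym. Qed.
Lemma adj_diag x : adj x x = 0. Proof. by rewrite /adj (negbTE (e_irr x)). Qed.
Lemma adjK x y : adj x y * adj x y = adj x y. Proof. exact: b2zK. Qed.
Lemma deltaC x y : delta x y = delta y x. Proof. by rewrite /delta eq_sym. Qed.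
Lemma inSK y : inS y * inS y = inS y. Proof. exact: b2zK. Qed.

Lemma outS_b2z x : outS x = b2z (x \notin S).
Proof. by rewrite /outS /inS; case: (x \in S). Qed.

Lemma outS_ge0 x : 0 <= outS x.
Proof. by rewrite outS_b2z b2z_ge0. Qed.

Lemma outS_out x : x \notin S -> outS x = 1.
Proof. by move=> xS; rewrite outS_b2z xS. Qed.

Lemma sum_adj x : \sum_z adj x z = 30.
Proof. by rewrite -card_set_b2z deg. Qed.

(* The strongly regular identity A^2 = 30 I + 8 A + 14 (J - I - A). *)
Lemma sum_adj_adj x y : \sum_z adj x z * adj y z = 16 * delta x y - 6 * adj x y + 14.
Proof.
rewrite (eq_bigr (fun z => b2z (e x z && e y z))); last by move=> z _; rewrite b2zM.
rewrite -card_set_b2z /delta /adj; case: (eqVneq x y) => [<-|nxy].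
  rewrite (negbTE (e_irr x)).
  have -> : [set z | e x z && e x z] = [set z | e x z].
    by apply/setP => z; rewrite !inE andbb.
  by rewrite deg.
by case exy: (e x y); [rewrite lam | rewrite mu // exy].
Qed.

Lemma sum_inS : \sum_y inS y = 16.
Proof.
rewrite -card_set_b2z -[16]/(16%N%:R); congr (_%:R).
by rewrite -[RHS]card_S; apply: eq_card => y; rewrite inE.
Qed.

Lemma sum_outS : \sum_y outS y = 60.
Proof. by rewrite sumrB sumr_const card_T sum_inS. Qed.

Lemma sum_delta_l x (f : T -> int) : \sum_z delta x z * f z = f x.
Proof.
rewrite (bigD1 x) //= /delta eqxx mul1r big1 ?addr0 // => z /negbTE.
by rewrite eq_sym => ->; rewrite mul0r.
Qed.

Lemma sum_delta_r x (f : T -> int) : \sum_z delta z x * f z = f x.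
Proof. by rewrite -(sum_delta_l x f); apply: eq_bigr => z _; rewrite deltaC. Qed.

Lemma inS_adj y z : inS y * inS z * adj y z = 0.
Proof.
rewrite /inS /adj; case yS: (y \in S); case zS: (z \in S); rewrite ?mul0r ?mulr0 //.
by rewrite (negbTE (S_coclique yS zS)).
Qed.

Definition nbS x := \sum_y inS y * adj x y.

Lemma inS_nbS x : inS x * nbS x = 0.
Proof. by rewrite /nbS mulr_sumr big1 // => y _; rewrite mulrA inS_adj. Qed.

Lemma sum_outS_adj y : \sum_x outS x * adj y x = 30 - nbS y.
Proof. by rewrite /nbS -(sum_adj y) -sumrB; apply: eq_bigr => x _; rewrite /outS; ring. Qed.

Lemma sum_outS_nbS : \sum_x outS x * nbS x = 480.
Proof.
transitivity (\sum_y inS y * \sum_x outS x * adj y x).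
  rewrite (eq_bigr (fun x => \sum_y outS x * (inS y * adj x y))); last first.
    by move=> x _; rewrite mulr_sumr.
  rewrite exchange_big /=; apply: eq_bigr => y _; rewrite mulr_sumr.
  by apply: eq_bigr => x _; rewrite adjC; ring.
rewrite (eq_bigr (fun y => 30 * inS y - inS y * nbS y)); last first.
  by move=> y _; rewrite sum_outS_adj; ring.
by rewrite sumrB -mulr_sumr sum_inS big1 ?subr0 // => y _; rewrite inS_nbS.
Qed.

Definition comS x z := \sum_y inS y * adj x y * adj z y.

Lemma comSC x z : comS x z = comS z x.
Proof. by apply: eq_bigr => y _; ring. Qed.

Lemma comS_diag x : comS x x = nbS x.
Proof. by apply: eq_bigr => y _; rewrite -mulrA adjK. Qed.

Lemma inS_comS y y' : inS y * comS y y' = 0.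
Proof.
rewrite /comS mulr_sumr big1 // => z _.
transitivity ((inS y * inS z * adj y z) * adj y' z); first ring.
by rewrite inS_adj mul0r.
Qed.

Lemma sum_outS_adj_adj y y' :
  \sum_x outS x * adj y x * adj y' x = 16 * delta y y' - 6 * adj y y' + 14 - comS y y'.
Proof. by rewrite -sum_adj_adj -sumrB; apply: eq_bigr => x _; rewrite /outS; ring. Qed.

Lemma inS_sum_outS_adj_adj y y' :
  inS y * inS y' * \sum_x outS x * adj y x * adj y' x =
  16 * (delta y y' * (inS y * inS y')) + 14 * (inS y * inS y').
Proof.
rewrite sum_outS_adj_adj.
transitivity (16 * (delta y y' * (inS y * inS y')) - 6 * (inS y * inS y' * adj y y')
  + 14 * (inS y * inS y') - inS y' * (inS y * comS y y')); first ring.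
by rewrite inS_adj inS_comS !mulr0 !subr0.
Qed.

Lemma sum_outS_nbS2 : \sum_x outS x * nbS x ^+ 2 = 3840.
Proof.
transitivity (\sum_y \sum_y' inS y * inS y' * \sum_x outS x * adj y x * adj y' x).
  rewrite -sum_mul_lincomb; apply: eq_bigr => x _.
  rewrite /nbS (eq_bigr (fun y => inS y * adj y x)) => [|y _]; last by rewrite adjC.
  by rewrite expr2 mulrA.
rewrite (eq_bigr (fun y => 16 * inS y + 14 * 16 * inS y)).
  by rewrite big_split /= -!mulr_sumr sum_inS.
move=> y _; rewrite (eq_bigr _ (fun y' _ => inS_sum_outS_adj_adj y y')).
rewrite big_split /= -!mulr_sumr sum_delta_l inSK sum_inS; ring.
Qed.

Lemma nbS_out x : x \notin S -> nbS x = 8.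
Proof.
move=> xS; apply/eqP; rewrite -subr_eq0; apply/eqP.
apply: (@sumr_wsq_eq0 _ _ outS (fun z => nbS z - 8) outS_ge0 _ x); last by rewrite outS_out.
rewrite (eq_bigr (fun x => outS x * nbS x ^+ 2 - 16 * (outS x * nbS x) + 64 * outS x)).
  by rewrite big_split /= sumrB -!mulr_sumr sum_outS_nbS2 sum_outS_nbS sum_outS.
by move=> z _; ring.
Qed.

Lemma inS_delta x y : x \notin S -> inS y * delta x y = 0.
Proof.
move=> xS; rewrite /inS /delta; case: (eqVneq x y) => [<-|_]; last by rewrite mulr0.
by rewrite (negbTE xS) mul0r.
Qed.

Lemma sum_outS_delta x (f : T -> int) : x \notin S -> \sum_z outS z * delta x z * f z = f x.
Proof.
move=> xS; rewrite (eq_bigr (fun z => delta x z * (outS z * f z))) => [|z _]; last by ring.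
by rewrite sum_delta_l outS_out // mul1r.
Qed.

Lemma sum_outS_adj_out x : x \notin S -> \sum_z outS z * adj x z = 22.
Proof. by move=> xS; rewrite sum_outS_adj nbS_out. Qed.

Lemma sum_outS_comS_out x : x \notin S -> \sum_z outS z * comS x z = 240.
Proof.
move=> xS; transitivity (\sum_y inS y * adj x y * \sum_z outS z * adj y z).
  rewrite /comS; transitivity (\sum_z \sum_y outS z * (inS y * adj x y * adj z y)).
    by apply: eq_bigr => z _; rewrite mulr_sumr.
  rewrite exchange_big; apply: eq_bigr => y _ /=; rewrite mulr_sumr.
  by apply: eq_bigr => z _; rewrite (adjC z y); ring.
transitivity (\sum_y 30 * (inS y * adj x y)).
  apply: eq_bigr => y _; rewrite sum_outS_adj.
  transitivity (30 * (inS y * adj x y) - adj x y * (inS y * nbS y)); first ring.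
  by rewrite inS_nbS mulr0 subr0.
by rewrite -mulr_sumr -/(nbS x) nbS_out.
Qed.

Section OuterPair.
Variables x w : T.
Hypotheses (xS : x \notin S) (wS : w \notin S).

Lemma sum_outS_adj_comS : \sum_z outS z * adj x z * comS w z = -6 * comS x w + 112.
Proof.
transitivity (\sum_y inS y * adj w y * \sum_z outS z * adj x z * adj y z).
  rewrite /comS; transitivity (\sum_z \sum_y outS z * adj x z * (inS y * adj w y * adj z y)).
    by apply: eq_bigr => z _; rewrite mulr_sumr.
  rewrite exchange_big; apply: eq_bigr => y _ /=; rewrite mulr_sumr.
  by apply: eq_bigr => z _; rewrite (adjC z y); ring.
transitivity (\sum_y (-6 * (inS y * adj x y * adj w y) + 14 * (inS y * adj w y))).
  apply: eq_bigr => y _; rewrite sum_outS_adj_adj.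
  transitivity (16 * adj w y * (inS y * delta x y) - adj w y * (inS y * comS y x)
    - 6 * (inS y * adj x y * adj w y) + 14 * (inS y * adj w y)); first by rewrite (comSC y x); ring.
  by rewrite inS_delta // inS_comS; ring.
by rewrite big_split /= -!mulr_sumr -/(nbS w) nbS_out.
Qed.

Lemma sum_outS_comS_comS : \sum_z outS z * comS x z * comS w z = 16 * comS x w + 896.
Proof.
transitivity (\sum_y \sum_y' inS y * adj x y * (inS y' * adj w y') *
    \sum_z outS z * adj y z * adj y' z).
  rewrite -sum_mul_lincomb; apply: eq_bigr => z _; rewrite /comS.
  by congr (_ * _ * _); apply: eq_bigr => y _; rewrite (adjC z y).
transitivity (\sum_y \sum_y' (16 * (delta y y' * (inS y * adj x y * (inS y' * adj w y')))
    + 14 * (inS y * adj x y * (inS y' * adj w y')))).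
  apply: eq_bigr => y _; apply: eq_bigr => y' _; rewrite sum_outS_adj_adj.
  transitivity (16 * (delta y y' * (inS y * adj x y * (inS y' * adj w y')))
    + 14 * (inS y * adj x y * (inS y' * adj w y'))
    - 6 * adj x y * adj w y' * (inS y * inS y' * adj y y')
    - adj x y * inS y' * adj w y' * (inS y * comS y y')); first ring.
  by rewrite inS_adj inS_comS !mulr0 !subr0.
rewrite (eq_bigr (fun y => 16 * (inS y * adj x y * adj w y) + 14 * (inS y * adj x y) * nbS w)).
  by rewrite big_split /= -mulr_suml -!mulr_sumr -/(comS x w) -/(nbS x) !nbS_out //; ring.
move=> y _; rewrite big_split /= -!mulr_sumr sum_delta_l -/(nbS w).
transitivity (16 * (inS y * inS y * adj x y * adj w y) + 14 * (inS y * adj x y) * nbS w); first ring.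
by rewrite inSK.
Qed.

End OuterPair.

Definition Q x z := 12 * delta x z - 6 * adj x z - 3 * comS x z + 14.

Lemma Q_diag x : x \notin S -> Q x x = 2.
Proof. by move=> xS; rewrite /Q adj_diag comS_diag nbS_out // /delta eqxx. Qed.

Lemma Q_sq x w : x \notin S -> w \notin S -> \sum_z outS z * Q x z * Q w z = 60 * Q x w.
Proof.
move=> xS wS.
transitivity (\sum_z (144 * (outS z * delta x z * delta w z) - 72 * (outS z * delta x z * adj w z)
  - 36 * (outS z * delta x z * comS w z) + 168 * (outS z * delta x z * 1)
  - 72 * (outS z * delta w z * adj x z) + 36 * (outS z * adj x z * adj w z)
  + 18 * (outS z * adj x z * comS w z) - 84 * (outS z * adj x z)
  - 36 * (outS z * delta w z * comS x z) + 18 * (outS z * adj w z * comS x z)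
  + 9 * (outS z * comS x z * comS w z) - 42 * (outS z * comS x z)
  + 168 * (outS z * delta w z * 1) - 84 * (outS z * adj w z)
  - 42 * (outS z * comS w z) + 196 * outS z)).
  by apply: eq_bigr => z _; rewrite /Q; ring.
rewrite !(big_split, sumrN) /= -!mulr_sumr.
rewrite !sum_outS_delta // sum_outS_adj_adj !sum_outS_adj_comS // sum_outS_comS_comS //.
rewrite !sum_outS_adj_out // !sum_outS_comS_out // sum_outS.
by rewrite (deltaC w x) (adjC w x) (comSC w x) /Q; ring.
Qed.

Lemma Q_lincomb_sq x w (c : int) : x \notin S -> w \notin S ->
  \sum_z outS z * (Q x z + c * Q w z) ^+ 2 = 60 * (Q x x + 2 * c * Q x w + c ^+ 2 * Q w w).
Proof.
move=> xS wS.
transitivity (\sum_z (outS z * Q x z * Q x z + 2 * c * (outS z * Q x z * Q w z)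
  + c ^+ 2 * (outS z * Q w z * Q w z))); first by apply: eq_bigr => z _; ring.
by rewrite !big_split /= -!mulr_sumr !Q_sq //; ring.
Qed.

Lemma Q_vals x w : x \notin S -> w \notin S -> Q x w = 2 \/ Q x w = -1.
Proof.
move=> xS wS.
have Q_ge c : 0 <= 60 * (Q x x + 2 * c * Q x w + c ^+ 2 * Q w w).
  by rewrite -Q_lincomb_sq // sumr_wsq_ge0 // => z; apply: outS_ge0.
have := Q_ge 1; have := Q_ge (-1); rewrite !Q_diag //.
have -> : Q x w = 3 * (4 * delta x w - 2 * adj x w - comS x w + 4) + 2 by rewrite /Q; ring.
set k := 4 * delta x w - 2 * adj x w - comS x w + 4; rewrite !expr2 => Q_le Q_ge'.
have : k = 0 \/ k = -1 by lia.
by case=> ->; [left | right].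
Qed.

Lemma Q_row_eq x w z : x \notin S -> w \notin S -> z \notin S -> Q x w = 2 -> Q x z = Q w z.
Proof.
move=> xS wS zS Qxw; apply/eqP; rewrite -subr_eq0; apply/eqP.
apply: (@sumr_wsq_eq0 _ _ outS (fun z => Q x z - Q w z) outS_ge0 _ z); last by rewrite outS_out.
have := Q_lincomb_sq (-1) xS wS; rewrite Qxw !Q_diag // (eq_bigr (fun z => outS z * (Q x z - Q w z) ^+ 2)).
  by move=> ->; rewrite expr2; ring.
by move=> y _; rewrite mulN1r.
Qed.

Section OuterClass.
Variable x0 : T.
Hypothesis x0S : x0 \notin S.

Definition inClass z := (z \notin S) && (Q x0 z == 2).
Definition cls z := b2z (inClass z).

Lemma inClass_out z : inClass z -> z \notin S.
Proof. by case/andP. Qed.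

Lemma clsK z : cls z * cls z = cls z.
Proof. exact: b2zK. Qed.

Lemma outS_Q z : outS z * Q x0 z = 3 * cls z - outS z.
Proof.
rewrite /cls /inClass outS_b2z; case: (boolP (z \in S)) => zS /=; first by rewrite !mul0r.
by rewrite mul1r; case: (Q_vals x0S zS) => ->.
Qed.

Lemma sum_cls : \sum_z cls z = 20.
Proof.
have sum_outS_Q : \sum_z outS z * Q x0 z = 0.
  transitivity (\sum_z (12 * (outS z * delta x0 z * 1) - 6 * (outS z * adj x0 z)
    - 3 * (outS z * comS x0 z) + 14 * outS z)); first by apply: eq_bigr => z _; rewrite /Q; ring.
  rewrite !(big_split, sumrN) /= -!mulr_sumr sum_outS_delta // sum_outS_adj_out //.
  by rewrite sum_outS_comS_out // sum_outS.
move: sum_outS_Q; rewrite (eq_bigr _ (fun z _ => outS_Q z)) sumrB -mulr_sumr sum_outS.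
move=> h; have sum3 : 3 * \sum_z cls z = 60 by apply/eqP; rewrite -subr_eq0 h.
lia.
Qed.

Lemma Q_class z w : inClass z -> inClass w -> Q z w = 2.
Proof.
by case/andP=> zS /eqP Qz /andP[wS /eqP Qw]; rewrite -(Q_row_eq x0S zS wS Qz).
Qed.

Lemma Q_class_l z w : inClass z -> w \notin S -> Q z w = 3 * cls w - 1.
Proof.
case/andP=> zS /eqP Qz wS; rewrite -(Q_row_eq x0S zS wS Qz).
by have := outS_Q w; rewrite outS_out // mul1r.
Qed.

Lemma sum_cls_adj x : inClass x -> \sum_z cls z * adj x z = 2.
Proof.
move=> xC; have xS := inClass_out xC.
have adj_Q : \sum_z outS z * adj x z * Q x z = -16.
  transitivity (\sum_z (12 * (outS z * delta x z * adj x z) - 6 * (outS z * adj x z)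
    - 3 * (outS z * adj x z * comS x z) + 14 * (outS z * adj x z))).
    apply: eq_bigr => z _; rewrite /Q.
    transitivity (12 * (outS z * delta x z * adj x z) - 6 * (outS z * (adj x z * adj x z))
      - 3 * (outS z * adj x z * comS x z) + 14 * (outS z * adj x z)); first ring.
    by rewrite adjK.
  rewrite !(big_split, sumrN) /= -!mulr_sumr sum_outS_delta // adj_diag sum_outS_adj_out //.
  by rewrite sum_outS_adj_comS // comS_diag nbS_out.
have : \sum_z outS z * adj x z * Q x z = 3 * (\sum_z cls z * adj x z) - 22.
  rewrite -(sum_outS_adj_out xS) mulr_sumr -sumrB; apply: eq_bigr => z _.
  case: (boolP (z \in S)) => zS.
    by rewrite /cls /inClass zS outS_b2z zS /=; ring.
  by rewrite (Q_class_l xC zS) outS_out //; ring.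
by rewrite adj_Q => h; lia.
Qed.

Definition sgn x p := 2 * adj x p - 1.
Definition gram x z := \sum_p inS p * sgn x p * sgn z p.

Lemma sgnK x p : sgn x p * sgn x p = 1.
Proof. by rewrite /sgn /adj; case: (e x p). Qed.

Lemma gramC x z : gram x z = gram z x.
Proof. by apply: eq_bigr => p _; ring. Qed.

Lemma gramE x z : gram x z = 4 * comS x z - 2 * nbS x - 2 * nbS z + 16.
Proof.
transitivity (\sum_p (4 * (inS p * adj x p * adj z p) - 2 * (inS p * adj x p)
  - 2 * (inS p * adj z p) + inS p)); first by apply: eq_bigr => p _; rewrite /sgn; ring.
by rewrite !(big_split, sumrN) /= -!mulr_sumr sum_inS.
Qed.

Lemma gram_class x z : inClass x -> inClass z -> gram x z = 16 * delta x z - 8 * adj x z.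
Proof.
move=> xC zC; have := Q_class xC zC; rewrite /Q gramE !nbS_out ?inClass_out // => h; lia.
Qed.

Lemma sum_inS_sgn x : x \notin S -> \sum_p inS p * sgn x p = 0.
Proof.
move=> xS; transitivity (\sum_p (2 * (inS p * adj x p) - inS p)).
  by apply: eq_bigr => p _; rewrite /sgn; ring.
by rewrite sumrB -mulr_sumr -/(nbS x) nbS_out // sum_inS.
Qed.

(* By gram_class the sum of the sign vectors of a triangle has norm 0, yet all its coordinates are odd. *)
Lemma class_triangle_free x z w :
  inClass x -> inClass z -> inClass w -> e x z -> e z w -> ~~ e x w.
Proof.
move=> xC zC wC exz ezw; apply/negP => exw.
have neq a b : e a b -> delta a b = 0.
  by move=> eab; rewrite /delta; case: eqP => // ab; rewrite ab (negbTE (e_irr b)) in eab.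
have norm0 : \sum_p inS p * (sgn x p + sgn z p + sgn w p) ^+ 2 = 0.
  transitivity (gram x x + gram z z + gram w w + 2 * (gram x z + gram z w + gram x w)).
    by rewrite /gram !mulrDr !mulr_sumr -!big_split /=; apply: eq_bigr => p _; ring.
  rewrite !gram_class // (neq x z) // (neq z w) // (neq x w) // !adj_diag.
  by rewrite /adj exz ezw exw /delta !eqxx.
have : \sum_p inS p <= \sum_p inS p * (sgn x p + sgn z p + sgn w p) ^+ 2.
  apply: ler_sum => p _; rewrite -[X in X <= _]mulr1 ler_wpM2l ?b2z_ge0 //.
  by rewrite /sgn /adj; case: (e x p); case: (e z p); case: (e w p).
by rewrite norm0 sum_inS.
Qed.

Definition W x z := 4 * delta x z + adj x z.
Definition K p q := \sum_x \sum_z cls x * cls z * W x z * sgn x p * sgn z q.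
Definition Wsgn x q := \sum_z cls z * W x z * sgn z q.
Definition F a b := \sum_y cls y * gram a y * W y b.

Lemma WC x z : W x z = W z x.
Proof. by rewrite /W deltaC adjC. Qed.

Lemma K_Wsgn p q : K p q = \sum_x cls x * Wsgn x q * sgn x p.
Proof.
by apply: eq_bigr => x _; rewrite /Wsgn mulr_sumr mulr_suml; apply: eq_bigr => z _; ring.
Qed.

Lemma sum_K2_gram : \sum_p \sum_q inS p * inS q * K p q ^+ 2 =
  \sum_x \sum_x' cls x * cls x' * gram x x' * \sum_q inS q * Wsgn x q * Wsgn x' q.
Proof.
rewrite exchange_big.
transitivity (\sum_q \sum_x \sum_x' inS q * (cls x * Wsgn x q) * (cls x' * Wsgn x' q) * gram x x').
  apply: eq_bigr => q _ /=.
  transitivity (inS q * \sum_p inS p * (\sum_x cls x * Wsgn x q * sgn x p)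
                                     * (\sum_x cls x * Wsgn x q * sgn x p)).
    by rewrite mulr_sumr; apply: eq_bigr => p _; rewrite K_Wsgn expr2; ring.
  rewrite sum_mul_lincomb mulr_sumr; apply: eq_bigr => x _.
  by rewrite mulr_sumr; apply: eq_bigr => x' _; ring.
rewrite exchange_big; apply: eq_bigr => x _ /=.
rewrite exchange_big; apply: eq_bigr => x' _ /=.
by rewrite mulr_sumr; apply: eq_bigr => q _; ring.
Qed.

Lemma sum_K2 : \sum_p \sum_q inS p * inS q * K p q ^+ 2 =
  \sum_a \sum_b cls a * cls b * F a b * F b a.
Proof.
rewrite sum_K2_gram.
transitivity (\sum_x \sum_x' \sum_z \sum_z'
    cls x * cls x' * gram x x' * (cls z * W x z * (cls z' * W x' z') * gram z z')).
  apply: eq_bigr => x _; apply: eq_bigr => x' _; rewrite sum_mul_lincomb mulr_sumr.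
  by apply: eq_bigr => z _; rewrite mulr_sumr.
rewrite exchange_big; apply: eq_bigr => x' _ /=.
rewrite exchange_big; apply: eq_bigr => z _ /=.
rewrite /F -mulrA mulr_sum_sum mulr_sumr; apply: eq_bigr => x _.
rewrite mulr_sumr; apply: eq_bigr => z' _.
by rewrite (gramC x' x) (WC z' x'); ring.
Qed.

Definition path2 a b := \sum_y cls y * adj a y * adj y b.
Definition V a b := 2 * adj a b + path2 a b.

Lemma cls_gram a y : inClass a -> cls y * gram a y = cls y * (16 * delta a y - 8 * adj a y).
Proof.
by move=> aC; rewrite /cls; case: (boolP (inClass y)) => yC; rewrite ?mul0r ?gram_class.
Qed.

Lemma cls_in a : inClass a -> cls a = 1.
Proof. by rewrite /cls => ->. Qed.

Lemma F_class a b : inClass a -> inClass b -> F a b = 64 * delta a b - 8 * V a b.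
Proof.
move=> aC bC.
transitivity (\sum_y (64 * (delta a y * (cls y * delta y b)) + 16 * (delta a y * (cls y * adj y b))
   - 32 * (delta y b * (cls y * adj a y)) - 8 * (cls y * adj a y * adj y b))).
  by apply: eq_bigr => y _; rewrite /W cls_gram //; ring.
rewrite !(big_split, sumrN) /= -!mulr_sumr !sum_delta_l !sum_delta_r !cls_in //.
by rewrite /V /path2; ring.
Qed.

Lemma sum_cls_path2 a : inClass a -> \sum_b cls b * path2 a b = 4.
Proof.
move=> aC; transitivity (\sum_y cls y * adj a y * \sum_b cls b * adj y b).
  rewrite /path2; transitivity (\sum_b \sum_y cls b * (cls y * adj a y * adj y b)).
    by apply: eq_bigr => b _; rewrite mulr_sumr.
  rewrite exchange_big; apply: eq_bigr => y _ /=; rewrite mulr_sumr.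
  by apply: eq_bigr => b _; ring.
transitivity (\sum_y 2 * (cls y * adj a y)); last by rewrite -mulr_sumr sum_cls_adj.
apply: eq_bigr => y _; rewrite /cls; case: (boolP (inClass y)) => yC; last by rewrite !mul0r mulr0.
by rewrite sum_cls_adj //; ring.
Qed.

Lemma V_diag a : inClass a -> V a a = 2.
Proof.
move=> aC; rewrite /V adj_diag mulr0 add0r -(sum_cls_adj aC).
by apply: eq_bigr => y _; rewrite (adjC y a) -mulrA adjK.
Qed.

Lemma sum_cls_V a : inClass a -> \sum_b cls b * V a b = 8.
Proof.
move=> aC; transitivity (\sum_b (2 * (cls b * adj a b) + cls b * path2 a b)).
  by apply: eq_bigr => b _; rewrite /V; ring.
by rewrite big_split /= -mulr_sumr sum_cls_adj // sum_cls_path2.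
Qed.

(* Adjacent vertices of a class have no common neighbour in it, so V a b lies in [0, 2]. *)
Lemma V_range a b : inClass a -> inClass b -> V a b * V a b <= 2 * V a b.
Proof.
move=> aC bC.
have path2_ge0 : 0 <= path2 a b.
  by apply: sumr_ge0 => y _; rewrite !mulr_ge0 ?b2z_ge0.
have path2_le2 : path2 a b <= 2.
  rewrite -(sum_cls_adj aC); apply: ler_sum => y _.
  by rewrite /cls /adj; case: (inClass y); case: (e a y); case: (e y b).
rewrite /V; case eab: (e a b).
  have -> : path2 a b = 0.
    apply: big1 => y _; rewrite /cls /adj; case: (boolP (inClass y)) => yC; last by rewrite !mul0r.
    case eay: (e a y); case eyb: (e y b); rewrite ?mulr0 //.
    by have := class_triangle_free aC yC bC eay eyb; rewrite eab.
  by rewrite /adj eab.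
rewrite /adj eab mulr0 add0r.
have : path2 a b = 0 \/ path2 a b = 1 \/ path2 a b = 2 by lia.
by case=> [->|[->|->]].
Qed.

Lemma VC a b : V a b = V b a.
Proof. by rewrite /V adjC /path2; congr (_ + _); apply: eq_bigr => y _; rewrite adjC (adjC y b); ring. Qed.

Lemma sum_cls_F2 a : inClass a -> \sum_b cls b * F a b * F b a <= 3072.
Proof.
move=> aC.
have -> : \sum_b cls b * F a b * F b a = 4096 * \sum_b delta a b * cls b
    - 1024 * \sum_b delta a b * (cls b * V a b) + 64 * \sum_b cls b * (V a b * V a b).
  rewrite !mulr_sumr -sumrB -big_split /=; apply: eq_bigr => b _.
  rewrite /cls; case: (boolP (inClass b)) => bC /=; last by ring.
  rewrite !F_class // (VC b a) (deltaC b a) /delta.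
  by case: eqP => [<-|_] /=; ring.
rewrite (sum_delta_l a cls) (sum_delta_l a (fun b => cls b * V a b)) /= (cls_in aC) (V_diag aC).
have : \sum_b cls b * (V a b * V a b) <= 2 * 8.
  rewrite -(sum_cls_V aC) mulr_sumr; apply: ler_sum => b _.
  rewrite /cls; case: (boolP (inClass b)) => bC /=; first by rewrite !mul1r V_range.
  by rewrite !mul0r mulr0.
by move: (\sum_b _) => X; lia.
Qed.

Lemma sum_K2_le : \sum_p \sum_q inS p * inS q * K p q ^+ 2 <= 3072 * 20.
Proof.
have : \sum_a \sum_b cls a * cls b * F a b * F b a <= 3072 * 20.
  rewrite -sum_cls mulr_sumr; apply: ler_sum => a _.
  rewrite /cls; case: (boolP (inClass a)) => aC /=.
    rewrite (eq_bigr (fun b => cls b * F a b * F b a)) ?mulr1 ?sum_cls_F2 // => b _.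
    by rewrite mul1r.
  by rewrite mulr0 big1 // => b _; rewrite !mul0r.
by rewrite sum_K2; move: (\sum_a _) => X; lia.
Qed.

Lemma sum_cls_deg : \sum_x cls x * \sum_z cls z * adj x z = 40.
Proof.
rewrite (eq_bigr (fun x => 2 * cls x)); first by rewrite -mulr_sumr sum_cls.
move=> x _; rewrite /cls; case: (boolP (inClass x)) => xC /=; last by ring.
by rewrite sum_cls_adj //; ring.
Qed.

Lemma sum_K_diag : \sum_p inS p * K p p = 960.
Proof.
transitivity (\sum_x \sum_z cls x * cls z * W x z * gram x z).
  rewrite /K /gram; transitivity (\sum_p \sum_x \sum_z
      inS p * (cls x * cls z * W x z * sgn x p * sgn z p)).
    by apply: eq_bigr => p _; rewrite mulr_sumr; apply: eq_bigr => x _; rewrite mulr_sumr.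
  rewrite exchange_big; apply: eq_bigr => x _ /=; rewrite exchange_big; apply: eq_bigr => z _ /=.
  by rewrite mulr_sumr; apply: eq_bigr => p _; ring.
rewrite (eq_bigr (fun x => 64 * cls x - 8 * (cls x * \sum_z cls z * adj x z))).
  by rewrite sumrB -!mulr_sumr sum_cls sum_cls_deg.
move=> x _; rewrite (eq_bigr (fun z => 64 * (delta x z * (cls x * cls z))
    - 8 * (cls x * (cls z * adj x z)))); last first.
  move=> z _; rewrite /cls; case: (boolP (inClass x)) => xC /=; last by ring.
  case: (boolP (inClass z)) => zC /=; last by ring.
  rewrite gram_class // /W /delta; case: eqP => [<-|_] /=; first by rewrite adj_diag; ring.
  by rewrite -[in RHS](adjK x z); ring.
by rewrite sumrB -!mulr_sumr sum_delta_l clsK.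
Qed.

Lemma sum_K_row p : \sum_q inS q * K p q = 0.
Proof.
transitivity (\sum_x \sum_z cls x * W x z * sgn x p * (cls z * \sum_q inS q * sgn z q)).
  rewrite /K; transitivity (\sum_q \sum_x \sum_z
      inS q * (cls x * cls z * W x z * sgn x p * sgn z q)).
    by apply: eq_bigr => q _; rewrite mulr_sumr; apply: eq_bigr => x _; rewrite mulr_sumr.
  rewrite exchange_big; apply: eq_bigr => x _ /=; rewrite exchange_big; apply: eq_bigr => z _ /=.
  by rewrite !mulr_sumr; apply: eq_bigr => q _; ring.
apply: big1 => x _; apply: big1 => z _; rewrite /cls.
case: (boolP (inClass z)) => zC /=; last by rewrite mul0r mulr0.
by rewrite sum_inS_sgn ?inClass_out // !mulr0.
Qed.

(* By the trace and the row sums of K, the left-hand side equals sum K_pq^2 - 61440. *)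
Lemma sum_K_dev_le0 : \sum_p \sum_q inS p * inS q * (64 * delta p q - 4 - K p q) ^+ 2 <= 0.
Proof.
have -> : \sum_p \sum_q inS p * inS q * (64 * delta p q - 4 - K p q) ^+ 2 =
    \sum_p (3840 * inS p - 128 * (inS p * K p p) + 8 * (inS p * \sum_q inS q * K p q))
    + \sum_p \sum_q inS p * inS q * K p q ^+ 2.
  rewrite -big_split /=; apply: eq_bigr => p _.
  rewrite (eq_bigr (fun q => 3584 * (delta p q * (inS p * inS q)) + 16 * (inS p * inS q)
     - 128 * (delta p q * (inS p * inS q * K p q)) + 8 * (inS p * (inS q * K p q))
     + inS p * inS q * K p q ^+ 2)); last first.
    by move=> q _; rewrite /delta; case: eqP => [<-|_] /=; ring.
  rewrite !(big_split, sumrN) /= -!mulr_sumr (sum_delta_l p (fun q => inS p * inS q)).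
  rewrite (sum_delta_l p (fun q => inS p * inS q * K p q)) sum_inS inSK; ring.
rewrite !(big_split, sumrN) /= -!mulr_sumr sum_inS sum_K_diag big1 => [|p _]; last first.
  by rewrite sum_K_row mulr0.
by move: sum_K2_le; move: (\sum_p \sum_q _) => X; lia.
Qed.

Lemma K_diag p : p \in S -> K p p = 60.
Proof.
move=> pS; pose w pq := inS pq.1 * inS pq.2.
pose f pq := 64 * delta pq.1 pq.2 - 4 - K pq.1 pq.2.
have w_ge0 pq : 0 <= w pq by rewrite mulr_ge0 ?b2z_ge0.
have dev0 : \sum_pq w pq * f pq ^+ 2 = 0.
  rewrite -(pair_bigA _ (fun p q => w (p, q) * f (p, q) ^+ 2)) /w /f /=.
  apply/eqP; rewrite eq_le sum_K_dev_le0 /=.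
  apply: sumr_ge0 => p' _; apply: sumr_ge0 => q _.
  by rewrite mulr_ge0 ?sqr_ge0 //; apply: (w_ge0 (p', q)).
have := @sumr_wsq_eq0 _ _ w f w_ge0 dev0 (p, p).
by rewrite /w /f /= /inS /delta pS eqxx /= => /(_ isT) h; lia.
Qed.

Lemma K_diag_edges p :
  K p p = 80 + \sum_x \sum_z cls x * cls z * adj x z * sgn x p * sgn z p.
Proof.
rewrite /K (eq_bigr (fun x => 4 * cls x + \sum_z cls x * cls z * adj x z * sgn x p * sgn z p)).
  by rewrite big_split /= -mulr_sumr sum_cls.
move=> x _; rewrite (eq_bigr (fun z => 4 * (delta x z * (cls x * cls z * sgn x p * sgn z p))
    + cls x * cls z * adj x z * sgn x p * sgn z p)) => [|z _]; last by rewrite /W; ring.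
rewrite big_split /= -mulr_sumr (sum_delta_l x (fun z => cls x * cls z * sgn x p * sgn z p)) /=.
transitivity (4 * (cls x * cls x) * (sgn x p * sgn x p)
  + \sum_z cls x * cls z * adj x z * sgn x p * sgn z p); first ring.
by rewrite clsK sgnK mulr1.
Qed.

Definition nonadj x p := 1 - adj x p.

Lemma sum_edges_nonadj p :
  \sum_x \sum_z cls x * cls z * adj x z * nonadj x p = 2 * \sum_x cls x * nonadj x p.
Proof.
rewrite mulr_sumr; apply: eq_bigr => x _.
rewrite (eq_bigr (fun z => cls x * nonadj x p * (cls z * adj x z))) => [|z _]; last by ring.
rewrite -mulr_sumr /cls; case: (boolP (inClass x)) => xC /=; last by ring.
by rewrite -/cls (eq_bigr (fun z => cls z * adj x z)) // sum_cls_adj //; ring.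
Qed.

(* K_diag rewritten through sgn = 1 - 2 nonadj. *)
Lemma sum_edges_nonadj2 p : p \in S ->
  \sum_x \sum_z cls x * cls z * adj x z * nonadj x p * nonadj z p =
  2 * (\sum_x cls x * nonadj x p) - 15.
Proof.
move=> pS; have := K_diag pS; rewrite K_diag_edges.
have -> : \sum_x \sum_z cls x * cls z * adj x z * sgn x p * sgn z p =
    \sum_x \sum_z cls x * cls z * adj x z - 2 * (\sum_x \sum_z cls x * cls z * adj x z * nonadj x p)
    - 2 * (\sum_x \sum_z cls x * cls z * adj x z * nonadj z p)
    + 4 * (\sum_x \sum_z cls x * cls z * adj x z * nonadj x p * nonadj z p).
  rewrite !mulr_sumr -!sumrB -!big_split /=.
  apply: eq_bigr => x _; rewrite !mulr_sumr -!sumrB -!big_split /=.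
  by apply: eq_bigr => z _; rewrite /sgn /nonadj; ring.
have sum_edges : \sum_x \sum_z cls x * cls z * adj x z = 40.
  by rewrite -sum_cls_deg; apply: eq_bigr => x _; rewrite mulr_sumr; apply: eq_bigr => z _; ring.
have sum_edges_nonadj_r :
    \sum_x \sum_z cls x * cls z * adj x z * nonadj z p = 2 * \sum_x cls x * nonadj x p.
  rewrite exchange_big -sum_edges_nonadj; apply: eq_bigr => x _; apply: eq_bigr => z _ /=.
  by rewrite (adjC z x); ring.
rewrite sum_edges sum_edges_nonadj_r sum_edges_nonadj.
by move: (\sum_x _ * nonadj x p) (\sum_x \sum_z _) => m N; lia.
Qed.

Lemma notin_S p : p \notin S.
Proof.
apply/negP => pS; pose f x z := cls x * cls z * adj x z * nonadj x p * nonadj z p.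
have fC x z : f x z = f z x by rewrite /f (adjC x z); ring.
have f0 x : f x x = 0 by rewrite /f adj_diag; ring.
have [M even_edges] := sum_sym_diag0_even fC f0.
have := sum_edges_nonadj2 pS; rewrite even_edges.
by move: (\sum_x _) => m; lia.
Qed.

End OuterClass.

End CocliqueInSRG.

Local Close Scope ring_scope.

Theorem mainTheorem17 (T : finType) (e : rel T) :
  srg e 76 30 8 14 ->
  ~ (exists S : {set T}, #|S| = 16 /\ coclique e S).
Proof.
case=> [[e_sym e_irr] card_T deg lam mu] [S [card_S S_coclique]].
have /card_gt0P [x0] : 0 < #|~: S|.
  by rewrite -(ltn_add2l #|S|) cardsC addn0 card_S card_T.
rewrite inE => x0S; have /card_gt0P [p pS] : 0 < #|S| by rewrite card_S.
by have := notin_S e_sym e_irr card_T deg lam mu card_S S_coclique x0S p; rewrite pS.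
Qed.
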